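(* Let $p$ be a prime and $n, k$ positive integers, $d = \gcd(n,k)$. Let $L(X) = \sum_{i=0}^t \alpha_i X^{p^i}$, $\alpha_i \in \mathbb{F}_p$, be a $p$-linearized polynomial without multiple roots, and let $L'$ be a $p$-linearized polynomial over $\mathbb{F}_p$ with $S_k^{2k}(X) = X - X^{p^k} = L \circ L'(X)$. Let $l'$ be the conventional $p$-associate of $L'$, let $w = (l', t_d^k)$, $u = l'/w$, $v = t_d^k/w$, and let $U, V$ be the linearized $p$-associates of $u, v$. Then $$U \circ L = S_d^{2d} \circ V.$$
   Context: For positive integers $l \mid k$ define $T_l^k(X) = \sum_{i=0}^{k/l - 1} X^{p^{li}}$ and $S_l^k(X) = \sum_{i=0}^{k/l-1} (-1)^i X^{p^{li}}$. For $l(X) = \sum \alpha_i X^i \in \mathbb{F}_p[X]$, its linearized $p$-associate is $\sum \alpha_i X^{p^i}$, and conversely $l$ is the conventional $p$-associate of that linearized polynomial; $t_d^k(X) = \sum_{i=0}^{k/d-1} X^{di}$ is the conventional $p$-associate of $T_d^k$. $(f,g)$ denotes the monic gcd in $\mathbb{F}_p[X]$. $\circ$ denotes composition. *)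

From mathcomp Require Import all_boot all_order all_algebra all_field.
Set Implicit Arguments. Unset Strict Implicit. Unset Printing Implicit Defensive.
Import GRing.Theory.
Local Open Scope ring_scope.

Definition lin_assoc (p : nat) (l : {poly 'F_p}) : {poly 'F_p} :=
  \sum_(i < size l) l`_i *: 'X^(p ^ i).

Definition T_lin (p l k : nat) : {poly 'F_p} :=
  \sum_(i < k %/ l) 'X^(p ^ (l * i)).

Definition S_lin (p l k : nat) : {poly 'F_p} :=
  \sum_(i < k %/ l) (-1) ^+ i *: 'X^(p ^ (l * i)).

Definition t_conv (p d k : nat) : {poly 'F_p} :=
  \sum_(i < k %/ d) 'X^(d * i).

Definition mgcd (p : nat) (f g : {poly 'F_p}) : {poly 'F_p} :=
  (lead_coef (gcdp f g))^-1 *: gcdp f g.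

From HB Require Import structures.
From mathcomp Require Import all_boot all_order all_algebra all_field.
Set Implicit Arguments. Unset Strict Implicit. Unset Printing Implicit Defensive.
Import GRing.Theory.
Local Open Scope ring_scope.

(* The linearized associate is an injective F_p-linear map taking products
   to compositions, because the Frobenius fixes the coefficients in F_p.  The
   identity to prove is therefore the image of  u l = (1 - X^d) v.  This holds
   because  l l' = 1 - X^k = (1 - X^d) t_d^k  and w divides both l' and t_d^k;
   neither the separability of L nor n plays any role beyond d | k. *)

Lemma comp_poly_exp (R : comNzRingType) (a q : {poly R}) n :
  a ^+ n \Po q = (a \Po q) ^+ n.
Proof. by rewrite -[LHS]/(comp_poly q (a ^+ n)) rmorphXn. Qed.

Lemma lin_assoc_widen (p n : nat) (l : {poly 'F_p}) : (size l <= n)%N ->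
  lin_assoc l = \sum_(i < n) l`_i *: 'X^(p ^ i).
Proof.
move=> le_l_n.
rewrite /lin_assoc (big_ord_widen n (fun i => l`_i *: 'X^(p ^ i)) le_l_n).
rewrite big_mkcond; apply: eq_bigr => i _; case: ltnP => // le_l_i.
by rewrite nth_default // scale0r.
Qed.

Lemma lin_assoc_is_linear (p : nat) : linear (@lin_assoc p).
Proof.
move=> c a b; set n := maxn (size a) (size b).
have le_ab_n : (size (c *: a + b)%R <= n)%N.
  rewrite (leq_trans (size_polyD _ _)) // geq_max leq_maxr andbT.
  exact: leq_trans (size_scale_leq _ _) (leq_maxl _ _).
rewrite (lin_assoc_widen le_ab_n) (lin_assoc_widen (leq_maxl (size a) (size b))).
rewrite (lin_assoc_widen (leq_maxr (size a) (size b))).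
rewrite scaler_sumr -big_split; apply: eq_bigr => i _.
by rewrite coefD coefZ scalerDl scalerA.
Qed.

HB.instance Definition _ (p : nat) :=
  GRing.isLinear.Build 'F_p {poly 'F_p} {poly 'F_p} _ (@lin_assoc p)
    (@lin_assoc_is_linear p).

Lemma lin_assocXn (p i : nat) : lin_assoc ('X^i : {poly 'F_p}) = 'X^(p ^ i).
Proof.
rewrite (@lin_assoc_widen p i.+1) ?size_polyXn // big_ord_recr /= big1.
  by rewrite coefXn eqxx scale1r add0r.
by move=> j _; rewrite coefXn (ltn_eqF (ltn_ord j)) scale0r.
Qed.

Lemma lin_assoc1 (p : nat) : lin_assoc (1 : {poly 'F_p}) = 'X.
Proof. by rewrite -(expr0 'X) lin_assocXn expn0 expr1. Qed.

Lemma lin_assocC (p : nat) (c : 'F_p) : lin_assoc c%:P = c *: 'X.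
Proof.
by rewrite (@lin_assoc_widen p 1) ?size_polyC_leq1 // big_ord1 coefC expn0 expr1.
Qed.

Lemma S_lin_double (p m : nat) : (0 < m)%N ->
  S_lin p m (2 * m) = lin_assoc (1 - 'X^m).
Proof.
move=> m_gt0; rewrite /S_lin mulnK // !big_ord_recl big_ord0 raddfB /= lin_assoc1.
by rewrite lin_assocXn muln0 expn0 expr0 scale1r expr1 muln1 scaleN1r addr0.
Qed.

Section PrimeField.

Variable p : nat.
Hypothesis p_pr : prime p.

Lemma Fp_exp_prime (c : 'F_p) : c ^+ p = c.
Proof. by have := expf_card c; rewrite card_Fp. Qed.

Lemma lin_assoc_mulX (b : {poly 'F_p}) : lin_assoc (b * 'X) = lin_assoc b ^+ p.
Proof.
have p_char : p \in [pchar {poly 'F_p}] := rmorph_pchar polyC (pchar_Fp p_pr).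
have le_bX : (size (b * 'X)%R <= (size b).+1)%N.
  by rewrite (leq_trans (size_polyMleq _ _)) // size_polyX addn2.
rewrite (lin_assoc_widen le_bX) big_ord_recl coefMX eqxx scale0r add0r /lin_assoc.
rewrite -[_ ^+ p](pFrobenius_autE p_char) rmorph_sum; apply: eq_bigr => i _ /=.
by rewrite coefMX /= pFrobenius_autE exprZn -exprM -expnSr Fp_exp_prime.
Qed.

Lemma lin_assocM (a b : {poly 'F_p}) :
  lin_assoc (a * b) = lin_assoc a \Po lin_assoc b.
Proof.
elim/poly_ind: a => [|a c IH]; first by rewrite mul0r raddf0 comp_poly0.
rewrite mulrDl mulrAC mul_polyC !raddfD /= linearZ /= !lin_assoc_mulX IH.
by rewrite lin_assocC comp_polyZ comp_polyX comp_poly_exp.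
Qed.

Lemma coef_lin_assoc (a : {poly 'F_p}) i : (lin_assoc a)`_(p ^ i) = a`_i.
Proof.
rewrite coef_sumMXn; under eq_bigl do rewrite eqn_exp2l ?prime_gt1 //.
by rewrite big_ord1_eq; case: ltnP => // le_a_i; rewrite nth_default.
Qed.

Lemma lin_assoc_inj : injective (@lin_assoc p).
Proof.
move=> a b eq_ab; apply/polyP => i.
by rewrite -(coef_lin_assoc a) -(coef_lin_assoc b) eq_ab.
Qed.

End PrimeField.

Lemma subXn_mul_t_conv (p d k : nat) : (d %| k)%N ->
  (1 - 'X^d) * t_conv p d k = 1 - 'X^k.
Proof.
move=> d_dvd_k; rewrite /t_conv; under eq_bigr do rewrite exprM.
by rewrite -opprB mulNr -subrX1 -exprM mulnC divnK // opprB.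
Qed.

Lemma mgcd_eqp (p : nat) (f g : {poly 'F_p}) : mgcd f g %= gcdp f g.
Proof.
rewrite /mgcd; have [->|gcd_nz] := eqVneq (gcdp f g) 0.
  by rewrite scaler0 eqpxx.
by rewrite eqp_scale // invr_eq0 lead_coef_eq0.
Qed.

Lemma mgcd_dvdl (p : nat) (f g : {poly 'F_p}) : mgcd f g %| f.
Proof. by rewrite (eqp_dvdl _ (mgcd_eqp f g)) dvdp_gcdl. Qed.

Lemma mgcd_dvdr (p : nat) (f g : {poly 'F_p}) : mgcd f g %| g.
Proof. by rewrite (eqp_dvdl _ (mgcd_eqp f g)) dvdp_gcdr. Qed.

Theorem proposition3 (p n k : nat) (l l' : {poly 'F_p}) :
  prime p -> (0 < n)%N -> (0 < k)%N ->
  let d := gcdn n k in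
  separable_poly (lin_assoc l) ->
  lin_assoc l \Po lin_assoc l' = S_lin p k (2 * k) ->
  let w := mgcd l' (t_conv p d k) in
  let u := l' %/ w in
  let v := t_conv p d k %/ w in
  lin_assoc u \Po lin_assoc l = S_lin p d (2 * d) \Po lin_assoc v.
Proof.
move=> p_pr _ k_gt0 d _ l_comp_l' w u v.
have d_gt0 : (0 < d)%N by rewrite gcdn_gt0 k_gt0 orbT.
have l_l' : l * l' = 1 - 'X^k.
  by apply: (lin_assoc_inj p_pr); rewrite lin_assocM // l_comp_l' S_lin_double.
have u_l : u * l = (1 - 'X^d) * v.
  rewrite divp_mulAC ?mgcd_dvdl // mulrC l_l' -(subXn_mul_t_conv p (dvdn_gcdr n k)).
  by rewrite divp_mulA ?mgcd_dvdr.
by rewrite -lin_assocM // u_l lin_assocM // S_lin_double.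
Qed.
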